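(* Let $G$ be a graph, let $\epsilon,\epsilon'$ be positive constants with $\epsilon+\epsilon'<1/2$, let $K$ be an $\epsilon$-almost-clique-like set of nodes, and let $k$ be an integer. Consider a $k$-bucketing of $K$ chosen uniformly at random (each $v\in K$ independently picks $t(v)\in[k]$ uniformly). Then for each $i\in[k]$, the probability that the $i$-th bucket fails to be $\epsilon'$-almost-clique-preserved is at most $2|K|\exp(-\epsilon'^2|K|/(6k))$.
   Context: $N(v)$ is the set of neighbors of $v$ in $G$. A set $K$ is $\epsilon$-almost-clique-like if $|N(v)\cap K|\ge(1-\epsilon)|K|$ for all $v\in K$. A $k$-bucketing of $K$ assigns $t(v)\in[k]$ to each $v\in K$, with buckets $T_j=\{v\in K:t(v)=j\}$. The $i$-th bucket $T_i$ is $\epsilon'$-almost-clique-preserved if for every $v\in K$, $(1-\epsilon')|N(v)\cap K|/k\le|N(v)\cap T_i|\le(1+\epsilon')|N(v)\cap K|/k$. *)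

From HB Require Import structures.
From mathcomp Require Import all_boot all_order all_algebra.
From mathcomp Require Import reals sequences exp.
Set Implicit Arguments. Unset Strict Implicit. Unset Printing Implicit Defensive.
Import Order.TTheory GRing.Theory Num.Theory.
Local Open Scope ring_scope.

Section Defs.
Variables (R : realType) (V : finType) (e : rel V).

Definition nbhd (v : V) : {set V} := [set u | e v u].

Definition almost_clique_like (eps : R) (K : {set V}) : Prop :=
  forall v, v \in K -> (1 - eps) * #|K|%:R <= #|nbhd v :&: K|%:R.

Definition bucket (k : nat) (K : {set V}) (t : V -> 'I_k) (i : 'I_k) : {set V} :=
  [set v in K | t v == i].

Definition clique_preserved (eps' : R) (k : nat) (K : {set V})
    (t : V -> 'I_k) (i : 'I_k) : bool :=
  [forall v in K,
    ((1 - eps') * #|nbhd v :&: K|%:R / k%:R <= #|nbhd v :&: bucket K t i|%:R) &&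
    (#|nbhd v :&: bucket K t i|%:R <= (1 + eps') * #|nbhd v :&: K|%:R / k%:R)].

End Defs.

From mathcomp Require Import all_boot all_order all_algebra.
From mathcomp Require Import reals sequences exp.
From mathcomp Require Import ring lra.
Set Implicit Arguments.
Unset Strict Implicit.
Unset Printing Implicit Defensive.

Import Order.TTheory GRing.Theory Num.Theory.
Local Open Scope ring_scope.

(* For a fixed v in K, the size of N(v) ∩ T_i is a sum of d = |N(v) ∩ K|
   independent Bernoulli(1/k) indicators; summing over all bucketings gives the
   moment generating function (1 + (e^x - 1)/k)^d <= exp(mu (e^x - 1)) with
   mu = d/k.  Markov's inequality with x = ±3ε'/4 bounds both tails by
   exp(-ε'^2 mu / (3 + 6ε')); the bound e^x <= (1 - x/4)^-4 reduces this to a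
   polynomial inequality in ε'.  Since mu >= (1 - ε)|K|/k >= (1/2 + ε')|K|/k,
   each tail is at most exp(-ε'^2 |K| / (6k)), and a union bound over the two
   tails and the vertices of K gives the factor 2|K|. *)

Lemma leq_card_bigcup (I T : finType) (P : pred I) (A : I -> {set T}) :
  (#|\bigcup_(j | P j) A j| <= \sum_(j | P j) #|A j|)%N.
Proof.
elim/big_rec2: _ => [|j B n _ IH]; first by rewrite cards0.
by rewrite (leq_trans (leq_card_setU _ _).1) ?leq_add2l.
Qed.

Lemma card_le_sum (R : numDomainType) (T : finType) (A : {set T}) (f : T -> R) :
  (forall t, 0 <= f t) -> {in A, forall t, 1 <= f t} -> #|A|%:R <= \sum_t f t.
Proof.
move=> f_ge0 f_ge1.
have -> : #|A|%:R = \sum_(t in A) (1 : R) by rewrite sumr_const.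
apply: le_trans (ler_sum _ f_ge1) _.
by rewrite [leRHS](bigID (mem A)) /= lerDl sumr_ge0.
Qed.

Lemma exprn_1Ddivn_le_expR (R : realType) (n : nat) (x : R) :
  (0 < n)%N -> - n%:R <= x -> (1 + x / n%:R) ^+ n <= expR x.
Proof.
move=> n_gt0 x_ge; have n_pos : 0 < n%:R :> R by rewrite ltr0n.
rewrite -[x in expR x](divfK (lt0r_neq0 n_pos)) expRM_natr.
rewrite lerXn2r ?nnegrE ?expR_ge0 ?expR_ge1Dx //.
by rewrite -(pmulr_rge0 _ n_pos) mulrDr mulr1 mulrC divfK ?gt_eqF // -lerBlDl sub0r.
Qed.

Lemma mulr_expR_le (R : realType) (n : nat) (c x Q : R) : (0 < n)%N ->
  0 <= c -> x < n%:R -> c <= (1 - x / n%:R) ^+ n * Q -> c * expR x <= Q.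
Proof.
move=> n_gt0 c_ge0 x_lt cQ; set p := (1 - x / n%:R) ^+ n in cQ.
have n_pos : 0 < n%:R :> R by rewrite ltr0n.
have p_gt0 : 0 < p by rewrite exprn_gt0 // subr_gt0 ltr_pdivrMr ?mul1r.
have pe_le1 : p * expR x <= 1.
  rewrite -(mulVf (lt0r_neq0 (expR_gt0 x))) ler_pM2r ?expR_gt0 // -expRN.
  by rewrite /p -mulNr exprn_1Ddivn_le_expR // lerN2 ltW.
have Q_ge0 : 0 <= Q by rewrite -(pmulr_rge0 _ p_gt0) (le_trans c_ge0).
apply: le_trans (ler_wpM2r (expR_ge0 x) cQ) _.
by rewrite mulrAC ler_piMl.
Qed.

Lemma chernoff_exponent_upper (R : realType) (d : R) : 0 < d -> d < 1 / 2 ->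
  (3 + 6 * d) * (expR (3 * d / 4) - 1 - 3 * d / 4 * (1 + d)) <= - d ^+ 2.
Proof.
move=> d_gt0 d_lt.
suff : (3 + 6 * d) * expR (3 * d / 4)
  <= (3 + 6 * d) * (1 + 3 * d / 4 * (1 + d)) - d ^+ 2 by lra.
by apply: (mulr_expR_le (n := 4)); [by [] | lra | lra | nra].
Qed.

Lemma chernoff_exponent_lower (R : realType) (d : R) : 0 < d -> d < 1 / 2 ->
  (3 + 6 * d) * (expR (- (3 * d / 4)) - 1 + 3 * d / 4 * (1 - d)) <= - d ^+ 2.
Proof.
move=> d_gt0 d_lt.
suff : (3 + 6 * d) * expR (- (3 * d / 4))
  <= (3 + 6 * d) * (1 - 3 * d / 4 * (1 - d)) - d ^+ 2 by lra.
by apply: (mulr_expR_le (n := 4)); [by [] | lra | lra | rewrite mulNr opprK; nra].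
Qed.

Lemma chernoff_exponent_mul_le (R : realFieldType) (eps del n d c : R) :
  0 < del -> 0 <= n -> eps + del < 1 / 2 -> (1 - eps) * n <= d ->
  (3 + 6 * del) * c <= - del ^+ 2 -> d * c <= - (del ^+ 2 * n / 6).
Proof.
move=> del_gt0 n_ge0 sum_lt nd cdel.
have half_n : (3 + 6 * del) * n <= 6 * d by nra.
have d_ge0 : 0 <= d by nra.
have := ler_wpM2l d_ge0 cdel.
have := ler_wpM2l (sqr_ge0 del) half_n.
rewrite -(ler_pM2l (_ : 0 < 3 + 6 * del)); last lra.
nra.
Qed.

Section RandomBucketing.
Variables (R : realType) (V : finType) (k : nat) (i : 'I_k).

Let k_gt0 : (0 < k)%N. Proof. exact: leq_ltn_trans (leq0n i) (ltn_ord i). Qed.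

Lemma setI_bucket (A K : {set V}) (t : V -> 'I_k) :
  A :&: bucket K t i = bucket (A :&: K) t i.
Proof. by apply/setP => u; rewrite !inE andbA. Qed.

Lemma sum_expr_card_bucket (a : R) (D : {set V}) :
  \sum_(t : {ffun V -> 'I_k}) a ^+ #|bucket D t i|
  = (a + k.-1%:R) ^+ #|D| * k%:R ^+ (#|V| - #|D|).
Proof.
pose F u (j : 'I_k) := if (u \in D) && (j == i) then a else 1.
have prodF (t : {ffun V -> 'I_k}) : a ^+ #|bucket D t i| = \prod_u F u (t u).
  by rewrite -prodr_const -big_mkcond; apply: eq_bigl => u; rewrite !inE.
have sumF u : \sum_j F u j = if u \in D then a + k.-1%:R else k%:R.
  rewrite /F; case: (u \in D) => /=; last by rewrite sumr_const card_ord.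
  rewrite (bigD1 i) //= eqxx (eq_bigr (fun=> 1)) => [|j /negbTE -> //].
  by rewrite sumr_const cardC1 card_ord.
rewrite (eq_bigr _ (fun t _ => prodF t)) -bigA_distr_bigA /=.
rewrite (eq_bigr _ (fun u _ => sumF u)) (bigID (mem D)) /=.
rewrite (eq_bigr (fun=> a + k.-1%:R)) => [|u ->] //.
rewrite [X in _ * X](eq_bigr (fun=> k%:R)) => [|u /negbTE ->] //.
rewrite !prodr_const -(cardC D) addKn.
by congr (_ ^+ _ * _ ^+ _); apply: eq_card => u; rewrite !inE.
Qed.

Lemma sum_expR_card_bucket_le (x : R) (D : {set V}) :
  \sum_(t : {ffun V -> 'I_k}) expR x ^+ #|bucket D t i|
  <= k%:R ^+ #|V| * expR (#|D|%:R / k%:R * (expR x - 1)).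
Proof.
have k_pos : 0 < k%:R :> R by rewrite ltr0n.
rewrite sum_expr_card_bucket.
set y := (expR x - 1) / k%:R.
have ky : expR x + k.-1%:R = k%:R * (1 + y).
  rewrite -subn1 natrB // /y.
  by field; rewrite gt_eqF.
have y_ge : 0 <= 1 + y by rewrite -(pmulr_rge0 _ k_pos) -ky addr_ge0 ?expR_ge0.
rewrite ky exprMn mulrAC -exprD subnKC ?max_card // mulrAC -mulrA expRM_natl.
rewrite ler_pM2l ?exprn_gt0 //.
by rewrite lerXn2r ?nnegrE ?expR_ge0 // expR_ge1Dx.
Qed.

Lemma card_bucket_tail_le (x c : R) (D : {set V}) :
  #|[set t : {ffun V -> 'I_k} |
      x * (c * (#|D|%:R / k%:R)) <= x * #|bucket D t i|%:R]|%:R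
  <= k%:R ^+ #|V| * expR (#|D|%:R / k%:R * (expR x - 1 - x * c)).
Proof.
set mu := #|D|%:R / k%:R.
pose f (t : {ffun V -> 'I_k}) := expR (x * #|bucket D t i|%:R - x * (c * mu)).
apply: (@le_trans _ _ (\sum_t f t)).
  apply: card_le_sum => [t|t]; first exact: expR_ge0.
  rewrite inE => dev; apply: le_trans (expR_ge1Dx _).
  by rewrite lerDl subr_ge0.
rewrite (eq_bigr (fun t : {ffun V -> 'I_k} =>
  expR x ^+ #|bucket D t i| * expR (- (x * (c * mu))))); last first.
  by move=> t _; rewrite /f expRD expRM_natr.
rewrite -mulr_suml.
apply: le_trans (ler_wpM2r (expR_ge0 _) (sum_expR_card_bucket_le x D)) _.
rewrite -(mulrA (k%:R ^+ _)) -expRD (_ : _ + _ = mu * (expR x - 1 - x * c)) //.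
by rewrite /mu; ring.
Qed.

Lemma chernoff_bound_le (eps del c : R) (n : nat) (D : {set V}) :
  0 < del -> eps + del < 1 / 2 -> (1 - eps) * n%:R <= #|D|%:R ->
  (3 + 6 * del) * c <= - del ^+ 2 ->
  k%:R ^+ #|V| * expR (#|D|%:R / k%:R * c)
  <= k%:R ^+ #|V| * expR (- (del ^+ 2 * n%:R / (6 * k%:R))).
Proof.
move=> del_gt0 sum_lt hD hc.
have k_pos : 0 < k%:R :> R by rewrite ltr0n.
have mu_ge : (1 - eps) * (n%:R / k%:R) <= #|D|%:R / k%:R.
  by rewrite mulrA ler_pM2r ?invr_gt0.
rewrite ler_pM2l ?exprn_gt0 // ler_expR.
have -> : del ^+ 2 * n%:R / (6 * k%:R) = del ^+ 2 * (n%:R / k%:R) / 6.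
  by field; rewrite gt_eqF.
by apply: chernoff_exponent_mul_le del_gt0 _ sum_lt mu_ge hc; rewrite divr_ge0.
Qed.

Lemma card_bucket_lower_dev_le (eps del : R) (n : nat) (D : {set V}) :
  0 <= eps -> 0 < del -> eps + del < 1 / 2 -> (1 - eps) * n%:R <= #|D|%:R ->
  #|[set t : {ffun V -> 'I_k} |
      #|bucket D t i|%:R < (1 - del) * #|D|%:R / k%:R]|%:R
  <= k%:R ^+ #|V| * expR (- (del ^+ 2 * n%:R / (6 * k%:R))).
Proof.
move=> eps_ge0 del_gt0 sum_lt hD.
have del_lt : del < 1 / 2 by lra.
have lam_gt0 : 0 < 3 * del / 4 by lra.
apply: le_trans (le_trans _ (card_bucket_tail_le (- (3 * del / 4)) (1 - del) D)) _.
  rewrite ler_nat subset_leq_card //; apply/subsetP => t.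
  by rewrite !inE ler_nM2l ?oppr_lt0 // mulrA => /ltW.
rewrite mulNr opprK; apply: chernoff_bound_le sum_lt hD _ => //.
exact: chernoff_exponent_lower.
Qed.

Lemma card_bucket_upper_dev_le (eps del : R) (n : nat) (D : {set V}) :
  0 <= eps -> 0 < del -> eps + del < 1 / 2 -> (1 - eps) * n%:R <= #|D|%:R ->
  #|[set t : {ffun V -> 'I_k} |
      (1 + del) * #|D|%:R / k%:R < #|bucket D t i|%:R]|%:R
  <= k%:R ^+ #|V| * expR (- (del ^+ 2 * n%:R / (6 * k%:R))).
Proof.
move=> eps_ge0 del_gt0 sum_lt hD.
have del_lt : del < 1 / 2 by lra.
have lam_gt0 : 0 < 3 * del / 4 by lra.
apply: le_trans (le_trans _ (card_bucket_tail_le (3 * del / 4) (1 + del) D)) _.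
  rewrite ler_nat subset_leq_card //; apply/subsetP => t.
  by rewrite !inE ler_pM2l // mulrA => /ltW.
apply: chernoff_bound_le sum_lt hD _ => //.
exact: chernoff_exponent_upper.
Qed.

End RandomBucketing.

Theorem lemma4p7 (R : realType) (V : finType) (e : rel V)
  (e_sym : symmetric e) (e_irr : irreflexive e)
  (eps eps' : R) (heps : 0 < eps) (heps' : 0 < eps')
  (hsum : eps + eps' < 1 / 2)
  (K : {set V}) (hK : almost_clique_like e eps K)
  (k : nat) (i : 'I_k) :
  #|[set t : {ffun V -> 'I_k} |
       ~~ clique_preserved e eps' K t i ]|%:R / (k ^ #|V|)%:R
  <= 2 * #|K|%:R * expR (- (eps' ^+ 2 * #|K|%:R / (6 * k%:R))).
Proof.
set E := expR _; pose B := k%:R ^+ #|V| * E.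
have k_pos : 0 < k%:R :> R by rewrite ltr0n (leq_ltn_trans (leq0n i) (ltn_ord i)).
pose D v := nbhd e v :&: K.
pose lo v := [set t : {ffun V -> 'I_k} |
  #|bucket (D v) t i|%:R < (1 - eps') * #|D v|%:R / k%:R].
pose hi v := [set t : {ffun V -> 'I_k} |
  (1 + eps') * #|D v|%:R / k%:R < #|bucket (D v) t i|%:R].
have bad_sub : [set t : {ffun V -> 'I_k} | ~~ clique_preserved e eps' K t i]
    \subset \bigcup_(v in K) (lo v :|: hi v).
  apply/subsetP => t; rewrite inE => /forall_inPn [v vK].
  rewrite setI_bucket negb_and -!ltNge => dev.
  by apply/bigcupP; exists v; rewrite // !inE.
have card_dev v : v \in K -> (#|lo v| + #|hi v|)%:R <= B + B.
  move=> vK; rewrite natrD; apply: lerD.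
    exact: card_bucket_lower_dev_le (ltW heps) heps' hsum (hK v vK).
  exact: card_bucket_upper_dev_le (ltW heps) heps' hsum (hK v vK).
rewrite natrX ler_pdivrMr ?exprn_gt0 //.
have -> : 2 * #|K|%:R * E * k%:R ^+ #|V| = \sum_(v in K) (B + B).
  by rewrite sumr_const -mulr_natr /B; ring.
apply: le_trans (ler_sum _ card_dev); rewrite -natr_sum ler_nat.
apply: leq_trans (subset_leq_card bad_sub) _.
apply: leq_trans (leq_card_bigcup _ _) _.
by apply: leq_sum => v _; exact: (leq_card_setU _ _).1.
Qed.
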